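(* No probabilistic algorithm can produce, with positive probability, an infinite binary sequence $\omega$ with the following property: there exists a non-decreasing unbounded computable function $g\colon\mathbb{N}\to\mathbb{N}$ such that $$K(\omega([k,k+n))\mid k,n)\ge g(n)$$ for all natural numbers $k$ and $n$. That is, for every probabilistic algorithm $A$, the probability that $A$ outputs an infinite sequence $\omega$ with this property is $0$.
   Context: A probabilistic algorithm is an algorithm that has access to a source of independent fair random bits and outputs binary digits one after another; with some probability it may output only finitely many bits. For an infinite binary sequence $\omega=\omega_0\omega_1\dots$, $\omega([i,j))$ denotes the substring $\omega_i\omega_{i+1}\dots\omega_{j-1}$. $K(x\mid y)$ denotes conditional Kolmogorov complexity of $x$ given $y$, i.e., the minimal length of a program that transforms $y$ into $x$ (with respect to a fixed optimal conditional decompressor); here the condition is the pair $(k,n)$. *)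

From mathcomp Require Import all_boot all_order all_algebra.
Set Implicit Arguments. Unset Strict Implicit. Unset Printing Implicit Defensive.
Import Order.TTheory GRing.Theory Num.Theory.

(* Model of computation: partial recursive functions of one nat argument  *)
(* (Kleene's mu-recursive functions, with Cantor pairing for tupling).    *)

Definition cpair (x y : nat) : nat := (((x + y) * (x + y).+1)./2 + y)%N.

Inductive code : Type :=
| CZero
| CSucc
| CId
| CFst
| CSnd
| CComp (f g : code)
| CPair (f g : code)
| CRec (f g : code)
| CMu (f : code).

Inductive eval : code -> nat -> nat -> Prop :=
| evZero x : eval CZero x 0
| evSucc x : eval CSucc x x.+1
| evId x : eval CId x x
| evFst x y : eval CFst (cpair x y) x
| evSnd x y : eval CSnd (cpair x y) y
| evComp f g x y z : eval g x y -> eval f y z -> eval (CComp f g) x z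
| evPair f g x y z : eval f x y -> eval g x z -> eval (CPair f g) x (cpair y z)
| evRec0 f g x y : eval f x y -> eval (CRec f g) (cpair x 0) y
| evRecS f g x n y z :
    eval (CRec f g) (cpair x n) y -> eval g (cpair (cpair x n) y) z ->
    eval (CRec f g) (cpair x n.+1) z
| evMu f x n :
    eval f (cpair x n) 0 ->
    (forall m, (m < n)%N -> exists v, eval f (cpair x m) v.+1) ->
    eval (CMu f) x n.

Definition computable (g : nat -> nat) : Prop :=
  exists c : code, forall n, eval c n (g n).

(* Bijective encoding of binary strings by natural numbers. *)
Fixpoint enc (w : seq bool) : nat :=
  match w with
  | [::] => 0
  | b :: w' => (enc w').*2 + 1 + b
  end.

(* A conditional decompressor is a partial computable function (a code)   *)
(* mapping <program p, condition y> to a string x.                        *)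

Definition decomp (d : code) (p : seq bool) (y : nat) (x : seq bool) : Prop :=
  eval d (cpair (enc p) y) (enc x).

Definition optimal_decompressor (d : code) : Prop :=
  forall d' : code, exists c : nat, forall (p' : seq bool) (y : nat) (x : seq bool),
    decomp d' p' y x -> exists p, decomp d p y x /\ (size p <= size p' + c)%N.

Definition Kcond_ge (d : code) (x : seq bool) (y : nat) (m : nat) : Prop :=
  forall p, decomp d p y x -> (m <= size p)%N.

Definition substr (omega : nat -> bool) (k n : nat) : seq bool :=
  [seq omega i | i <- iota k n].

Definition complex_substrings (d : code) (omega : nat -> bool) : Prop :=
  exists g : nat -> nat,
    computable g /\ {homo g : a b / (a <= b)%N} /\
    (forall m, exists n, (m <= g n)%N) /\
    forall k n, Kcond_ge d (substr omega k n) (cpair k n) (g n).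

(* Probabilistic algorithms, modelled (as usual) by a total computable    *)
(* monotone map M on finite strings: M w is the output produced having    *)
(* read the random bits w.                                                 *)

Definition seq_fun_computable (M : seq bool -> seq bool) : Prop :=
  exists c : code, forall w, eval c (enc w) (enc (M w)).

Definition prob_algorithm (M : seq bool -> seq bool) : Prop :=
  seq_fun_computable M /\
  forall w w', prefix w w' -> prefix (M w) (M w').

Definition outputs (M : seq bool -> seq bool) (r : nat -> bool) (omega : nat -> bool) : Prop :=
  forall i, exists n, (i < size (M (mkseq r n)))%N /\ nth false (M (mkseq r n)) i = omega i.

(* Null sets for the uniform (fair coin) measure on Cantor space:          *)
(* coverable by cylinders [w_i] of total measure sum 2^-|w_i| <= 2^-m,   *)
(* for every m (Lebesgue outer measure zero).                              *)

Definition cylinder (w : seq bool) (r : nat -> bool) : Prop :=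
  w = mkseq r (size w).

Definition null (S : (nat -> bool) -> Prop) : Prop :=
  forall m : nat, exists C : nat -> seq bool,
    (forall r, S r -> exists i, cylinder (C i) r) /\
    (forall N : nat, (\sum_(i < N) (2%:R : rat) ^- size (C i) <= (2%:R : rat) ^- m)%R).

From mathcomp Require Import all_boot all_order all_algebra zify ring.
Import Order.TTheory GRing.Theory Num.Theory.
From Stdlib Require Import ClassicalEpsilon.
Set Implicit Arguments. Unset Strict Implicit. Unset Printing Implicit Defensive.

(* Fix a block length n and a threshold a.  We construct, computably from (n, a), n-bit
   numbers s_0, s_1, ...  At stage k a random string v of length L survives if the output
   M v is long enough and, for every j < k, its n-bit window at position j differs from s_j.
   Take the least L at which the survivors have measure at least 2^-a, and let s_k be a
   value of the window at position k shared by at least a 2^-n fraction of them.  Each stage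
   kills measure 2^-(a+n), and no random string is killed twice (it would have to both match
   and avoid s_k), so after at most 2^(a+n) stages the survivors have measure below 2^-a at
   every length.
   With a = m + n + 2, s_j is computable from (j, n) and m, so K(s_j | j, n) is at most
   the length of the string coded by m plus a constant.  For n with g(n) above that bound,
   an output omega with K(omega([j, j+n)) | j, n) >= g(n) avoids every s_j, so the random
   bits producing it survive.  Covering, for all n, the minimal surviving prefixes gives
   cylinders of total measure at most 2^-m. *)

(** * Cantor pairing *)

(* The successor of <x+1, y> in the Cantor enumeration is <x, y+1>, that of <0, y> is <y+1, 0>. *)
Fixpoint unpair (z : nat) : nat * nat :=
  if z is z'.+1 then
    let: (x, y) := unpair z' in if x is x'.+1 then (x', y.+1) else (y.+1, 0)
  else (0, 0).

Lemma cpairS0 s : cpair s.+1 0 = (cpair 0 s).+1.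
Proof.
have tri : (s.+1 * s.+2)./2 = (s * s.+1)./2 + s.+1.
  have -> : s.+1 * s.+2 = s * s.+1 + (s.+1).*2 by rewrite -mul2n; nia.
  by rewrite halfD odd_double doubleK andbF.
rewrite /cpair !addn0 add0n tri; lia.
Qed.

Lemma cpairSr x y : cpair x y.+1 = (cpair x.+1 y).+1.
Proof. rewrite /cpair addnS addSn; lia. Qed.

Lemma unpairS z :
  unpair z.+1 = let: (x, y) := unpair z in if x is x'.+1 then (x', y.+1) else (y.+1, 0).
Proof. by []. Qed.

Lemma unpair_cpair x y : unpair (cpair x y) = (x, y).
Proof.
have [s Es] : exists s, x + y = s by exists (x + y).
elim: s x y Es => [|s IHs] x y.
  by move/eqP; rewrite addn_eq0 => /andP[/eqP-> /eqP->].
elim: y x => [|y IHy] x.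
  by rewrite addn0 => ->; rewrite cpairS0 unpairS (IHs 0 s).
by move=> Hs; rewrite cpairSr unpairS IHy // addSn -addnS.
Qed.

Definition cfst z := (unpair z).1.
Definition csnd z := (unpair z).2.

Lemma cfst_cpair x y : cfst (cpair x y) = x. Proof. by rewrite /cfst unpair_cpair. Qed.
Lemma csnd_cpair x y : csnd (cpair x y) = y. Proof. by rewrite /csnd unpair_cpair. Qed.

Lemma cpair_unpair z : cpair (cfst z) (csnd z) = z.
Proof.
rewrite /cfst /csnd; elim: z => [//|z]; rewrite unpairS.
by case: (unpair z) => [[|x] y] /= <-; rewrite ?cpairS0 ?cpairSr.
Qed.

(** * Closure properties of computable functions *)

Definition computable_pred (P : nat -> bool) := computable (fun z => nat_of_bool (P z)).

Lemma eq_computable f g : f =1 g -> computable f -> computable g.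
Proof. by move=> fg [c Hc]; exists c => x; rewrite -fg. Qed.

Lemma computable_id : computable (fun z => z).
Proof. by exists CId => x; apply: evId. Qed.

Lemma computable_comp f g : computable f -> computable g -> computable (fun z => f (g z)).
Proof. by move=> [cf Hf] [cg Hg]; exists (CComp cf cg) => x; apply: evComp (Hg x) (Hf _). Qed.

Lemma computable_succ A : computable A -> computable (fun z => (A z).+1).
Proof. by apply: (computable_comp (f := S)); exists CSucc => x; apply: evSucc. Qed.

Lemma computable_const k : computable (fun _ => k).
Proof.
elim: k => [|k]; last exact: computable_succ.
by exists CZero => x; apply: evZero.
Qed.

Lemma computable_cpair A B :
  computable A -> computable B -> computable (fun z => cpair (A z) (B z)).
Proof. by move=> [cA HA] [cB HB]; exists (CPair cA cB) => x; apply: evPair. Qed.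

Lemma computable_cfst : computable cfst.
Proof.
exists CFst => x.
by rewrite -{1}(cpair_unpair x); apply: evFst.
Qed.

Lemma computable_csnd : computable csnd.
Proof.
exists CSnd => x.
by rewrite -{1}(cpair_unpair x); apply: evSnd.
Qed.

Lemma computable_rec (h : nat -> nat -> nat) f g B :
  computable f -> computable g -> computable B ->
  (forall z, h z 0 = f z) -> (forall z n, h z n.+1 = g (cpair (cpair z n) (h z n))) ->
  computable (fun z => h z (B z)).
Proof.
move=> [cf Hf] [cg Hg] [cB HB] h0 hS.
exists (CComp (CRec cf cg) (CPair CId cB)) => z.
apply: evComp (evPair (evId z) (HB z)) _.
elim: (B z) => [|n IH]; first by rewrite h0; apply: evRec0.
by rewrite hS; apply: evRecS IH (Hg _).
Qed.

Section Closure.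

Local Notation arg w := (cfst (cfst w)).
Local Notation counter w := (csnd (cfst w)).
Local Notation prev w := (csnd w).

Lemma computable_arg : computable (fun w => arg w).
Proof. exact: computable_comp computable_cfst computable_cfst. Qed.

Lemma computable_counter : computable (fun w => counter w).
Proof. exact: computable_comp computable_csnd computable_cfst. Qed.

Lemma computable_prev : computable (fun w => prev w).
Proof. exact: computable_csnd. Qed.

Lemma computable_add A B : computable A -> computable B -> computable (fun z => A z + B z).
Proof.
move=> hA hB.
apply: (computable_rec (h := fun z n => A z + n) hA (computable_succ computable_prev) hB).
  by move=> z; rewrite addn0.
by move=> z n; rewrite csnd_cpair addnS.
Qed.

Lemma computable_sub A B : computable A -> computable B -> computable (fun z => A z - B z).
Proof.
have computable_prevn : computable (fun w => (prev w).-1).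
  apply: (computable_rec (h := fun w n => n.-1) (computable_const 0) computable_counter
            computable_prev) => // w n.
  by rewrite cfst_cpair csnd_cpair.
move=> hA hB; apply: (computable_rec (h := fun z n => A z - n) hA computable_prevn hB).
  by move=> z; rewrite subn0.
by move=> z n; rewrite csnd_cpair subnS.
Qed.

Lemma computable_mul A B : computable A -> computable B -> computable (fun z => A z * B z).
Proof.
move=> hA hB; apply: (computable_rec (h := fun z n => A z * n) (computable_const 0)
                  (computable_add computable_prev (computable_comp hA computable_arg)) hB).
  by move=> z; rewrite muln0.
by move=> z n; rewrite csnd_cpair !cfst_cpair mulnS addnC.
Qed.

Lemma computable_exp2 A : computable A -> computable (fun z => 2 ^ A z).
Proof.
move=> hA; apply: (computable_rec (h := fun z n => 2 ^ n) (computable_const 1)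
                       (computable_add computable_prev computable_prev) hA) => // z n.
by rewrite csnd_cpair expnS mul2n addnn.
Qed.

Lemma computable_leq A B : computable A -> computable B -> computable_pred (fun z => A z <= B z).
Proof.
move=> hA hB; apply: eq_computable (computable_sub (computable_const 1) (computable_sub hA hB)).
by move=> z; rewrite -subn_eq0; case: (A z - B z).
Qed.

Lemma computable_ltn A B : computable A -> computable B -> computable_pred (fun z => A z < B z).
Proof. by move=> hA; apply: computable_leq (computable_succ hA). Qed.

Lemma computable_andb P Q :
  computable_pred P -> computable_pred Q -> computable_pred (fun z => P z && Q z).
Proof.
move=> hP hQ; apply: eq_computable (computable_mul hP hQ) => z.
by case: (P z); case: (Q z).
Qed.

Lemma computable_negb P : computable_pred P -> computable_pred (fun z => ~~ P z).
Proof.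
move=> hP; apply: eq_computable (computable_sub (computable_const 1) hP) => z.
by case: (P z).
Qed.

Lemma computable_eqn A B : computable A -> computable B -> computable_pred (fun z => A z == B z).
Proof.
move=> hA hB; apply: eq_computable (computable_andb (computable_leq hA hB) (computable_leq hB hA)).
by move=> z; rewrite eqn_leq.
Qed.

Lemma computable_if P A B : computable_pred P -> computable A -> computable B ->
  computable (fun z => if P z then A z else B z).
Proof.
move=> hP hA hB.
apply: eq_computable
  (computable_add (computable_mul hP hA) (computable_mul (computable_negb hP) hB)).
by move=> z; case: (P z) => /=; rewrite ?mul1n ?mul0n ?addn0.
Qed.

Lemma computable_sum (G : nat -> nat -> nat) B :
  computable (fun w => G (cfst w) (csnd w)) -> computable B ->
  computable (fun z => \sum_(0 <= i < B z) G z i).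
Proof.
move=> hG hB; apply: (computable_rec (h := fun z n => \sum_(0 <= i < n) G z i) (computable_const 0)
  (computable_add computable_prev (computable_comp hG computable_cfst)) hB).
  by move=> z; rewrite big_geq.
by move=> z n; rewrite big_nat_recr //= !(csnd_cpair, cfst_cpair).
Qed.

Lemma computable_all (P : nat -> nat -> bool) B :
  computable_pred (fun w => P (cfst w) (csnd w)) -> computable B ->
  computable_pred (fun z => all (P z) (iota 0 (B z))).
Proof.
move=> hP hB; apply: (computable_rec (h := fun z n => nat_of_bool (all (P z) (iota 0 n)))
  (computable_const 1) (computable_mul computable_prev (computable_comp hP computable_cfst)) hB)
  => // z n.
rewrite !(csnd_cpair, cfst_cpair) -addn1 iotaD all_cat /= andbT add0n.
by case: all; rewrite ?mul1n.
Qed.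

Lemma find_iotaS (P : pred nat) n :
  find P (iota 0 n.+1) =
  let i := find P (iota 0 n) in if i < n then i else if P n then n else n.+1.
Proof.
rewrite -addn1 iotaD find_cat size_iota /= has_find size_iota.
by case: ltnP => // _; rewrite add0n; case: (P n); rewrite ?addn0 ?addn1.
Qed.

Lemma computable_find (P : nat -> nat -> bool) B :
  computable_pred (fun w => P (cfst w) (csnd w)) -> computable B ->
  computable (fun z => find (P z) (iota 0 (B z))).
Proof.
move=> hP hB.
have step : computable (fun w => if prev w < counter w then prev w
                                 else if P (arg w) (counter w) then counter w else (counter w).+1).
  apply: computable_if (computable_ltn computable_prev computable_counter) computable_prev _.
  exact: computable_if (computable_comp hP computable_cfst) computable_counter
           (computable_succ computable_counter).
apply: (computable_rec (h := fun z n => find (P z) (iota 0 n)) (computable_const 0) step hB)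
  => // z n.
by rewrite find_iotaS /= !(csnd_cpair, cfst_cpair).
Qed.

Lemma find_iota_eq (P : pred nat) n t :
  t < n -> P t -> (forall i, i < t -> ~~ P i) -> find P (iota 0 n) = t.
Proof.
move=> tn Pt before.
have -> : n = t + (n - t) by rewrite subnKC // ltnW.
rewrite iotaD find_cat size_iota add0n.
have -> : has P (iota 0 t) = false.
  by apply/hasP => -[i]; rewrite mem_iota add0n => /andP[_ /before/negbTE->].
by case: (n - t) (subn_gt0 t n) => [|k]; rewrite ?subn_gt0 ?tn //= Pt addn0.
Qed.

Lemma computable_div A B : computable A -> computable B -> computable (fun z => A z %/ B z).
Proof.
move=> hA hB.
have hq : computable (fun z => find (fun q => A z < q.+1 * B z) (iota 0 (A z).+1)).
  apply: (computable_find (P := fun z q => A z < q.+1 * B z)) (computable_succ hA).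
  apply: computable_ltn (computable_comp hA computable_cfst) _.
  exact: computable_mul (computable_succ computable_csnd) (computable_comp hB computable_cfst).
apply: eq_computable
  (computable_if (computable_eqn hB (computable_const 0)) (computable_const 0) hq).
move=> z; case: eqP => [->|/eqP Bz]; first by rewrite divn0.
have B0 : 0 < B z by rewrite lt0n.
apply: find_iota_eq; first by rewrite ltnS leq_div.
  exact: ltn_ceil.
move=> q Hq; rewrite -leqNgt (leq_trans _ (leq_divM (A z) (B z))) //.
by rewrite leq_mul2r Hq orbT.
Qed.

Lemma computable_mod A B : computable A -> computable B -> computable (fun z => A z %% B z).
Proof.
move=> hA hB; apply: eq_computable (computable_sub hA (computable_mul (computable_div hA hB) hB)).
by move=> z; rewrite {1}(divn_eq (A z) (B z)) [_ + _]addnC addnK.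
Qed.

End Closure.

Lemma eval_search cF cG (F G : nat -> nat) w L :
  (forall y, eval cF y (F y)) -> (forall y, eval cG y (G y)) ->
  F (cpair w L) = 0 -> (forall L', L' < L -> F (cpair w L') != 0) ->
  eval (CComp cG (CPair CId (CMu cF))) w (G (cpair w L)).
Proof.
move=> HF HG F0 Fpos; apply: evComp (HG _); apply: evPair (evId w) _.
apply: evMu; first by rewrite -F0.
by move=> L' lt; exists (F (cpair w L')).-1; rewrite prednK ?lt0n ?Fpos.
Qed.

Lemma eval_iterate cg (f : nat -> nat) x T : f 0 = 0 ->
  (forall t, t < T -> eval cg (cpair (cpair x t) (f t)) (f t.+1)) ->
  eval (CRec CZero cg) (cpair x T) (f T).
Proof.
move=> f0; elim: T => [|T IH] step; first by rewrite f0; apply/evRec0/evZero.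
by apply: evRecS (IH _) (step _ _) => // t lt; apply: step; rewrite ltnS ltnW.
Qed.

(** * Binary strings and their codes *)

Fixpoint nat_of_bits (w : seq bool) : nat :=
  if w is b :: w' then b + (nat_of_bits w').*2 else 0.

Fixpoint bits_of_nat (L i : nat) : seq bool :=
  if L is L'.+1 then odd i :: bits_of_nat L' i./2 else [::].

Lemma size_bits_of_nat L i : size (bits_of_nat L i) = L.
Proof. by elim: L i => [|L IH] i //=; rewrite IH. Qed.

Lemma nat_of_bits_lt w : nat_of_bits w < 2 ^ size w.
Proof. by elim: w => [|[] w IH] //=; rewrite expnS -muln2 mulnC; lia. Qed.

Lemma nat_of_bitsK w : bits_of_nat (size w) (nat_of_bits w) = w.
Proof.
elim: w => [|b w IH] //=.
by rewrite oddD odd_double addbF half_bit_double IH; case: b.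
Qed.

Lemma modn_exp2S i L : i %% 2 ^ L.+1 = odd i + (i./2 %% 2 ^ L).*2.
Proof.
have r_lt : odd i + i./2 %% 2 ^ L * 2 < 2 ^ L.+1.
  have := ltn_pmod i./2 (expn_gt0 2 L); rewrite expnS; case: odd => /=; lia.
rewrite -{1}(odd_double_half i) {1}(divn_eq i./2 (2 ^ L)) doubleD addnCA -!muln2.
by rewrite -mulnA -expnSr modnMDl modn_small.
Qed.

Lemma bits_of_natK L i : nat_of_bits (bits_of_nat L i) = i %% 2 ^ L.
Proof. by elim: L i => [|L IH] i /=; rewrite ?modn1 // IH modn_exp2S. Qed.

Lemma bits_of_nat_mod L i : bits_of_nat L (i %% 2 ^ L) = bits_of_nat L i.
Proof. by rewrite -bits_of_natK -{1}(size_bits_of_nat L i) nat_of_bitsK. Qed.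

Lemma take_bits_of_nat L L' i : L' <= L -> take L' (bits_of_nat L i) = bits_of_nat L' i.
Proof. by elim: L' L i => [|L' IH] [|L] i //= le; rewrite IH. Qed.

Lemma prefix_bits_of_nat L L' i : L <= L' -> prefix (bits_of_nat L i) (bits_of_nat L' i).
Proof. by move=> le; rewrite -(take_bits_of_nat i le) prefix_take. Qed.

Lemma nat_of_bits_drop j u : nat_of_bits (drop j u) = nat_of_bits u %/ 2 ^ j.
Proof.
elim: u j => [|b u IH] [|j] //=; rewrite ?div0n ?divn1 //.
by rewrite IH expnS divnMA divn2 half_bit_double.
Qed.

Lemma nat_of_bits_take n u : nat_of_bits (take n u) = nat_of_bits u %% 2 ^ n.
Proof.
elim: u n => [|b u IH] [|n] //=; rewrite ?mod0n ?modn1 //.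
by rewrite IH modn_exp2S oddD odd_double addbF half_bit_double; case: b.
Qed.

Lemma enc_bits w : (enc w).+1 = 2 ^ size w + nat_of_bits w.
Proof. by elim: w => [|b w IH] //=; move: IH; rewrite expnS; lia. Qed.

Lemma enc_inj : injective enc.
Proof.
elim=> [|b w IH] [|b' w'] //=; try lia.
move=> e; have eb : b = b' by move: e; case: b; case: b' => //=; lia.
by congr (_ :: _); last apply: IH; move: e; rewrite eb; lia.
Qed.

Lemma enc_surj x : exists w, enc w == x.
Proof.
elim/ltn_ind: x => -[|y] IH; first by exists [::].
have [w /eqP ew] : exists w, enc w == y./2 by apply: IH; rewrite ltn_half_double; lia.
by exists (odd y :: w); rewrite /= ew -{3}(odd_double_half y); apply/eqP; lia.
Qed.

Definition dec x : seq bool := xchoose (enc_surj x).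

Lemma decK : cancel dec enc.
Proof. by move=> x; apply/eqP; exact: (xchooseP (enc_surj x)). Qed.

Lemma encK : cancel enc dec.
Proof. by move=> w; apply: enc_inj; rewrite decK. Qed.

Lemma enc_bits_of_nat L v : v < 2 ^ L -> enc (bits_of_nat L v) = 2 ^ L - 1 + v.
Proof.
move=> lt; apply: succn_inj; rewrite enc_bits size_bits_of_nat bits_of_natK modn_small //.
by have := expn_gt0 2 L; lia.
Qed.

Lemma dec_code L v : v < 2 ^ L -> dec (2 ^ L - 1 + v) = bits_of_nat L v.
Proof. by move=> lt; rewrite -enc_bits_of_nat // encK. Qed.

Lemma leq_size_enc k u : (k <= size u) = (2 ^ k <= (enc u).+1).
Proof.
rewrite enc_bits; apply/idP/idP => [le | ].
  by rewrite (leq_trans _ (leq_addr _ _)) // leq_exp2l.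
apply: contraTT; rewrite -!ltnNge => lt.
by rewrite (leq_trans _ (leq_pexp2l _ lt)) // expnS mul2n -addnn ltn_add2l nat_of_bits_lt.
Qed.

Definition block n j (u : seq bool) : nat := nat_of_bits (take n (drop j u)).

Lemma block_lt n j u : block n j u < 2 ^ n.
Proof. by rewrite /block nat_of_bits_take ltn_pmod ?expn_gt0. Qed.

Lemma block_prefix n j u u' : prefix u u' -> j + n <= size u -> block n j u = block n j u'.
Proof.
rewrite prefixE => /eqP eu le; rewrite -eu /block !take_drop -take_min.
by rewrite (minn_idPl _) // addnC.
Qed.

Lemma block_enc n j u : j + n <= size u -> block n j u = (enc u).+1 %/ 2 ^ j %% 2 ^ n.
Proof.
move=> le; rewrite /block nat_of_bits_take nat_of_bits_drop enc_bits.
have -> : 2 ^ size u = 2 ^ (size u - j - n) * 2 ^ n * 2 ^ j.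
  by rewrite -!expnD; congr (2 ^ _); lia.
by rewrite divnDl ?dvdn_mull // mulnK ?expn_gt0 // modnMDl.
Qed.

(** * The greedy construction *)

Definition digit n s j := s %/ 2 ^ (j * n) %% 2 ^ n.

Lemma digit_low n s K x j : j < K -> digit n (s + 2 ^ (K * n) * x) j = digit n s j.
Proof.
move=> lt; rewrite /digit.
have -> : 2 ^ (K * n) * x = 2 ^ ((K - j.+1) * n) * x * 2 ^ n * 2 ^ (j * n).
  have -> : K * n = (K - j.+1) * n + n + j * n by nia.
  rewrite !expnD; nia.
by rewrite addnC divnMDl ?expn_gt0 // modnMDl.
Qed.

Lemma digit_top n s K x : s < 2 ^ (K * n) -> x < 2 ^ n -> digit n (s + 2 ^ (K * n) * x) K = x.
Proof.
move=> s_lt x_lt.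
by rewrite /digit addnC mulnC divnMDl ?expn_gt0 // divn_small // addn0 modn_small.
Qed.

Lemma sum_modn (F : nat -> nat) p q : \sum_(i < p * q) F (i %% p) = q * \sum_(i < p) F i.
Proof.
elim: q => [|q IH]; first by rewrite muln0 big_ord0.
rewrite mulnSr big_split_ord /= IH mulSn addnC; congr (_ + _).
by apply: eq_bigr => i _; rewrite mulnC modnMDl modn_small.
Qed.

Lemma sum_bool_le1 N (P : nat -> bool) :
  (forall i j, P i -> P j -> i = j) -> \sum_(i < N) P i <= 1.
Proof.
move=> uniqP; case: (pickP (fun i : 'I_N => P i)) => [i Pi | noP].
  2: by rewrite big1 // => i _; rewrite noP.
rewrite (bigD1 i) //= Pi big1 // => j ji; case Pj: (P j) => //.
by move: ji; rewrite -(inj_eq val_inj) /= (uniqP _ _ Pj Pi) eqxx.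
Qed.

Definition decide (P : Prop) : bool := if excluded_middle_informative P then true else false.

Lemma decideP P : reflect P (decide P).
Proof. by rewrite /decide; case: excluded_middle_informative => H; constructor. Qed.

Definition avoids n s k (u : seq bool) :=
  (k + n <= size u) && all (fun j => block n j u != digit n s j) (iota 0 k).

Lemma avoids_prefix n s k u u' : prefix u u' -> avoids n s k u -> avoids n s k u'.
Proof.
move=> pre /andP[le av]; rewrite /avoids (leq_trans le (size_prefix pre)) /=.
apply/allP => j j_in; have := allP av j j_in; rewrite mem_iota in j_in.
by rewrite (block_prefix pre) // (leq_trans _ le) // leq_add2r ltnW //; case/andP: j_in.
Qed.

Section Greedy.

Variables (M : seq bool -> seq bool) (n a : nat).

Definition survivor s k L v := avoids n s k (M (bits_of_nat L v)).

Definition survivors s k L := \sum_(v < 2 ^ L) survivor s k L v.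

Definition survivors_with s k L x :=
  \sum_(v < 2 ^ L) (survivor s k L v && (block n k (M (bits_of_nat L v)) == x)).

Definition popular s k L :=
  find (fun x => survivors s k L <= 2 ^ n * survivors_with s k L x) (iota 0 (2 ^ n)).

Definition heavy s k L := 2 ^ L <= survivors s k L * 2 ^ a.

Definition stage_defined s k := exists L, heavy s k L.

Definition stage_level s k : nat :=
  match excluded_middle_informative (stage_defined s k) with
  | left H => ex_minn H
  | right _ => 0
  end.

Fixpoint greedy k :=
  if k is k'.+1 then
    let s := greedy k' in s + 2 ^ (k' * n) * popular s k' (stage_level s k')
  else 0.

Definition halt_stage :=
  find (fun k => ~~ decide (stage_defined (greedy k) k)) (iota 0 (2 ^ (a + n)).+1).

Lemma sum_survivors_with s k L : \sum_(x < 2 ^ n) survivors_with s k L x = survivors s k L.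
Proof.
rewrite exchange_big; apply: eq_bigr => v _.
rewrite (bigD1 (Ordinal (block_lt n k (M (bits_of_nat L v))))) //= eqxx andbT big1 ?addn0 //.
by move=> x; rewrite -val_eqE eq_sym /= => /negbTE->; rewrite andbF.
Qed.

Lemma popular_spec s k L :
  popular s k L < 2 ^ n /\ survivors s k L <= 2 ^ n * survivors_with s k L (popular s k L).
Proof.
set P := fun x => survivors s k L <= 2 ^ n * survivors_with s k L x.
have card_pos : 0 < #|'I_(2 ^ n)| by rewrite card_ord expn_gt0.
have [x0 max_x0] := bigop.eq_bigmax (fun x : 'I_(2 ^ n) => survivors_with s k L x) card_pos.
have Px0 : P x0.
  rewrite /P -sum_survivors_with -max_x0.
  apply: (@leq_trans (\sum_(x < 2 ^ n) \max_(i < 2 ^ n) survivors_with s k L i)).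
    by apply: leq_sum => x _; apply: leq_bigmax.
  by rewrite sum_nat_const card_ord.
have hasP : has P (iota 0 (2 ^ n)) by apply/hasP; exists (val x0); rewrite ?mem_iota /=.
have lt : popular s k L < 2 ^ n by rewrite -(size_iota 0 (2 ^ n)) -has_find.
by split=> //; have := nth_find 0 hasP; rewrite nth_iota.
Qed.

Lemma stage_levelP s k : stage_defined s k ->
  heavy s k (stage_level s k) /\ forall L, L < stage_level s k -> ~~ heavy s k L.
Proof.
rewrite /stage_level; case: excluded_middle_informative => // H _.
case: ex_minnP => L HL min_L; split=> // L' lt; apply/negP => /min_L; lia.
Qed.

Lemma greedy_lt k : greedy k < 2 ^ (k * n).
Proof.
elim: k => [|k IH] /=; first by rewrite expn_gt0.
have [pop_lt _] := popular_spec (greedy k) k (stage_level (greedy k) k).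
rewrite mulSn expnD; move: IH pop_lt; set x := popular _ _ _; nia.
Qed.

Lemma digit_greedy j k :
  j < k -> digit n (greedy k) j = popular (greedy j) j (stage_level (greedy j) j).
Proof.
elim: k => [//|k IH]; rewrite ltnS leq_eqVlt => /predU1P[-> | lt] /=.
  by rewrite digit_top ?greedy_lt //; case: (popular_spec (greedy k) k (stage_level (greedy k) k)).
by rewrite digit_low // IH.
Qed.

Hypothesis M_mono : forall w w', prefix w w' -> prefix (M w) (M w').

Lemma block_output_levels L L' v j :
  j + n <= size (M (bits_of_nat L v)) -> j + n <= size (M (bits_of_nat L' v)) ->
  block n j (M (bits_of_nat L v)) = block n j (M (bits_of_nat L' v)).
Proof.
wlog le : L L' / L <= L'.
  by move=> W h h'; case: (leqP L L') => [|/ltnW] le; [apply: W | apply/esym/W].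
by move=> h _; apply: block_prefix (M_mono (prefix_bits_of_nat v le)) h.
Qed.

Definition killed k v :=
  let L := stage_level (greedy k) k in
  survivor (greedy k) k L v && (block n k (M (bits_of_nat L v)) == popular (greedy k) k L).

Lemma killed_once v k k' : killed k v -> killed k' v -> k = k'.
Proof.
wlog lt : k k' / k < k'.
  by move=> W kv kv'; case: (ltngtP k k') => // lt; [apply: W | apply/esym/(W _ _ lt kv' kv)].
rewrite /killed /survivor /avoids.
case/andP=> /andP[size_k _] /eqP block_k /andP[/andP[size_k' avoid_k'] _].
have := allP avoid_k' k; rewrite mem_iota lt => /(_ isT).
have size_kk' : k + n <= size (M (bits_of_nat (stage_level (greedy k') k') v)).
  by rewrite (leq_trans _ size_k') // leq_add2r ltnW.
by rewrite (digit_greedy lt) -block_k (block_output_levels size_k size_kk') eqxx.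
Qed.

Lemma many_killed k Lmax : stage_defined (greedy k) k -> stage_level (greedy k) k <= Lmax ->
  2 ^ Lmax <= (\sum_(v < 2 ^ Lmax) killed k v) * 2 ^ (a + n).
Proof.
move=> def le; set L := stage_level (greedy k) k.
have [heavy_L _] := stage_levelP def.
have [_ pigeon] := popular_spec (greedy k) k L.
have lift : \sum_(v < 2 ^ Lmax) killed k v =
            2 ^ (Lmax - L) * survivors_with (greedy k) k L (popular (greedy k) k L).
  have -> : 2 ^ Lmax = 2 ^ L * 2 ^ (Lmax - L) by rewrite -expnD subnKC.
  rewrite -(sum_modn (fun v => survivor (greedy k) k L v &&
                                 (block n k (M (bits_of_nat L v)) == popular (greedy k) k L))).
  apply: eq_bigr => v _.
  by rewrite /killed /survivor bits_of_nat_mod.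
rewrite lift -mulnA -{1}(subnK le) expnD leq_mul2l (leq_trans heavy_L) ?orbT //.
by move: pigeon; rewrite -/L expnD; nia.
Qed.

Lemma greedy_stops : ~ (forall k, k < (2 ^ (a + n)).+1 -> stage_defined (greedy k) k).
Proof.
set T := (2 ^ (a + n)).+1 => def; pose Lmax := \max_(k < T) stage_level (greedy k) k.
have upper : \sum_(k < T) \sum_(v < 2 ^ Lmax) killed k v <= 2 ^ Lmax.
  rewrite exchange_big (@leq_trans (\sum_(v < 2 ^ Lmax) 1)) //.
    apply: leq_sum => v _; apply: (@sum_bool_le1 _ (fun k => killed k v)).
    exact: killed_once.
  by rewrite big_const_ord iter_addn_0 mul1n.
have lower : T * 2 ^ Lmax <= (\sum_(k < T) \sum_(v < 2 ^ Lmax) killed k v) * 2 ^ (a + n).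
  have -> : T * 2 ^ Lmax = \sum_(k < T) 2 ^ Lmax by rewrite big_const_ord iter_addn_0 mulnC.
  rewrite big_distrl /=.
  by apply: leq_sum => k _; apply: many_killed; [apply: def | apply: leq_bigmax].
have := leq_trans lower (leq_mul upper (leqnn _)).
by rewrite mulnC leq_pmul2l ?expn_gt0 // ltnn.
Qed.

Lemma halt_stageP :
  ~ stage_defined (greedy halt_stage) halt_stage /\
  forall k, k < halt_stage -> stage_defined (greedy k) k.
Proof.
set T := (2 ^ (a + n)).+1.
have hasP : has (fun k => ~~ decide (stage_defined (greedy k) k)) (iota 0 T).
  apply/negPn/negP => /hasPn none; apply: greedy_stops => k lt; apply/decideP.
  by apply/negPn; apply: none; rewrite mem_iota.
have lt : halt_stage < T by rewrite -(size_iota 0 T) -has_find.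
split; first by have := nth_find 0 hasP; rewrite -/halt_stage nth_iota // => /decideP.
move=> k lt_k; apply/decideP; apply/negbFE.
by have := before_find 0 lt_k; rewrite nth_iota ?(ltn_trans lt_k).
Qed.

Definition survives w := avoids n (greedy halt_stage) halt_stage (M w).

Definition minimal_survivor w :=
  survives w && all (fun i => ~~ survives (take i w)) (iota 0 (size w)).

Definition count_survivors L := \sum_(v < 2 ^ L) survives (bits_of_nat L v).

Definition count_minimal_survivors L := \sum_(v < 2 ^ L) minimal_survivor (bits_of_nat L v).

Lemma minimal_survivor_survives w : minimal_survivor w -> survives w.
Proof. by case/andP. Qed.

Lemma survives_levels L L' v : L <= L' ->
  survives (bits_of_nat L v) -> survives (bits_of_nat L' v).
Proof. by move=> le; apply/avoids_prefix/M_mono/prefix_bits_of_nat. Qed.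

Lemma minimal_survivor_size w : minimal_survivor w -> n <= size (M w).
Proof. by case/andP=> /andP[le _] _; rewrite (leq_trans _ le) ?leq_addl. Qed.

Lemma survivors_sparse L : count_survivors L * 2 ^ a < 2 ^ L.
Proof.
have [undef _] := halt_stageP; rewrite ltnNge; apply/negP => heavy_L.
by apply: undef; exists L.
Qed.

Lemma survivors_double L :
  (count_survivors L).*2 + count_minimal_survivors L.+1 <= count_survivors L.+1.
Proof.
have -> : (count_survivors L).*2 =
          \sum_(v < 2 ^ L.+1) survives (bits_of_nat L v).
  rewrite -muln2 mulnC expnSr -(sum_modn (fun v => survives (bits_of_nat L v))).
  by apply: eq_bigr => v _; rewrite bits_of_nat_mod.
rewrite /count_minimal_survivors /count_survivors -big_split /=; apply: leq_sum => v _.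
case sL : (survives (bits_of_nat L v)) => /=.
  rewrite (survives_levels (leqnSn L) sL) /minimal_survivor.
  suff -> : all (fun i => ~~ survives (take i (bits_of_nat L.+1 v)))
                (iota 0 (size (bits_of_nat L.+1 v))) = false by rewrite andbF.
  apply/allP => /(_ L); rewrite mem_iota size_bits_of_nat ltnSn take_bits_of_nat // sL.
  by move/(_ isT).
by case: (boolP (minimal_survivor _)) => // /minimal_survivor_survives ->.
Qed.

End Greedy.

(** * The greedy construction is computable *)

(* [computable_cpair] must be tried before [computable_add], which would unfold [cpair]. *)
Ltac computability :=
  repeat first
    [ apply: computable_id | apply: computable_const | apply: computable_cpair
    | apply: computable_succ | apply: computable_add | apply: computable_sub
    | apply: computable_mul | apply: computable_exp2 | apply: computable_div
    | apply: computable_mod | apply: computable_sum | apply: computable_find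
    | apply: computable_leq | apply: computable_eqn | apply: computable_andb
    | apply: computable_negb | apply: computable_all | apply: computable_if
    | apply: computable_cfst | apply: computable_csnd
    | apply: computable_comp;
      first by [eassumption | apply: computable_cfst | apply: computable_csnd] ].

Definition Mcode (M : seq bool -> seq bool) x := enc (M (dec x)).

Lemma computable_Mcode M : seq_fun_computable M -> computable (Mcode M).
Proof. by case=> c Hc; exists c => x; rewrite /Mcode -{1}(decK x). Qed.

Definition avoids_code n s k e :=
  (2 ^ (k + n) <= e.+1) && all (fun j => e.+1 %/ 2 ^ j %% 2 ^ n != digit n s j) (iota 0 k).

Lemma avoids_code_enc n s k u : avoids_code n s k (enc u) = avoids n s k u.
Proof.
rewrite /avoids_code /avoids -(leq_size_enc (k + n) u); case le : (k + n <= size u) => //=.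
apply: eq_in_all => j; rewrite mem_iota => /andP[_ lt]; rewrite block_enc //.
by rewrite (leq_trans _ le) // leq_add2r ltnW.
Qed.

Section Program.

Variable M : seq bool -> seq bool.
Hypothesis M_computable : computable (Mcode M).

Lemma survivors_code n s k L :
  survivors M n s k L = \sum_(0 <= v < 2 ^ L) avoids_code n s k (Mcode M (2 ^ L - 1 + v)).
Proof. by rewrite big_mkord; apply: eq_bigr => v _; rewrite /Mcode dec_code // avoids_code_enc. Qed.

Lemma survivors_with_code n s k L x :
  survivors_with M n s k L x =
  \sum_(0 <= v < 2 ^ L) (avoids_code n s k (Mcode M (2 ^ L - 1 + v)) &&
                         ((Mcode M (2 ^ L - 1 + v)).+1 %/ 2 ^ k %% 2 ^ n == x)).
Proof.
rewrite big_mkord; apply: eq_bigr => v _; rewrite /Mcode dec_code // avoids_code_enc /survivor.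
by case av: avoids => //=; rewrite block_enc //; case/andP: av.
Qed.

Lemma computable_popular N S K L : computable N -> computable S -> computable K -> computable L ->
  computable (fun z => popular M (N z) (S z) (K z) (L z)).
Proof.
move=> hN hS hK hL.
pose F z := find (fun x =>
  \sum_(0 <= v < 2 ^ L z) avoids_code (N z) (S z) (K z) (Mcode M (2 ^ L z - 1 + v)) <=
  2 ^ N z * \sum_(0 <= v < 2 ^ L z) (avoids_code (N z) (S z) (K z) (Mcode M (2 ^ L z - 1 + v)) &&
                 ((Mcode M (2 ^ L z - 1 + v)).+1 %/ 2 ^ K z %% 2 ^ N z == x))) (iota 0 (2 ^ N z)).
have hF : computable F by rewrite /F /avoids_code /digit; computability.
apply: eq_computable hF => z.
by rewrite /F /popular survivors_code; apply: eq_find => x; rewrite survivors_with_code.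
Qed.

Lemma computable_heavy N A S K L :
  computable N -> computable A -> computable S -> computable K -> computable L ->
  computable_pred (fun z => heavy M (N z) (A z) (S z) (K z) (L z)).
Proof.
move=> hN hA hS hK hL.
pose P z := 2 ^ L z <=
  (\sum_(0 <= v < 2 ^ L z) avoids_code (N z) (S z) (K z) (Mcode M (2 ^ L z - 1 + v))) * 2 ^ A z.
have hP : computable_pred P by rewrite /P /avoids_code /digit; computability.
by apply: eq_computable hP => z; rewrite /P /heavy survivors_code.
Qed.

(* The 2 leaves room for the dummy cylinders of [cover]: sum_n 2^-(m+n+2) <= 2^-(m+1). *)
Definition threshold m n := m + n + 2.

Lemma greedy_program : exists d, forall E j n,
  (forall t, t <= j -> stage_defined M n (threshold E n) (greedy M n (threshold E n) t) t) ->
  eval d (cpair E (cpair j n)) (enc (bits_of_nat n (digit n (greedy M n (threshold E n) j.+1) j))).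
Proof.
(* A stage is encoded as [w = <<<a, n>, t>, s>]; the search for its level runs over [<w, L>]. *)
have [cF HF] : computable (fun y => ~~ heavy M (csnd (cfst (cfst (cfst y))))
    (cfst (cfst (cfst (cfst y)))) (csnd (cfst y)) (csnd (cfst (cfst y))) (csnd y)).
  by apply: computable_negb; apply: computable_heavy; computability.
have [cG HG] : computable (fun y => csnd (cfst y) +
    2 ^ (csnd (cfst (cfst y)) * csnd (cfst (cfst (cfst y)))) *
    popular M (csnd (cfst (cfst (cfst y)))) (csnd (cfst y)) (csnd (cfst (cfst y))) (csnd y)).
  apply: computable_add; last apply: computable_mul; last apply: computable_popular.
  all: computability.
pose cstep := CComp cG (CPair CId (CMu cF)).
have step a n t s : stage_defined M n a s t ->
    eval cstep (cpair (cpair (cpair a n) t) s)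
               (s + 2 ^ (t * n) * popular M n s t (stage_level M n a s t)).
  move=> def; have [heavy_L min_L] := stage_levelP def.
  have := eval_search HF HG (w := cpair (cpair (cpair a n) t) s) (L := stage_level M n a s t).
  rewrite !(cfst_cpair, csnd_cpair) heavy_L; apply=> // L' lt.
  by rewrite !(cfst_cpair, csnd_cpair) min_L.
have [cX HX] : computable (fun z => cpair (threshold (cfst z) (csnd (csnd z))) (csnd (csnd z))).
  by rewrite /threshold; computability.
have [cJ HJ] : computable (fun z => (cfst (csnd z)).+1) by computability.
have [cO HO] : computable (fun u => 2 ^ csnd (csnd (cfst u)) - 1 +
                                    digit (csnd (csnd (cfst u))) (csnd u) (cfst (csnd (cfst u)))).
  by rewrite /digit; computability.
exists (CComp cO (CPair CId (CComp (CRec CZero cstep) (CPair cX cJ)))) => E j n def.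
set a := threshold E n.
have greedy_j : eval (CRec CZero cstep) (cpair (cpair a n) j.+1) (greedy M n a j.+1).
  by apply: eval_iterate => // t lt; apply: step; apply: def.
apply: evComp (evPair (evId _) (evComp (evPair (HX _) (HJ _)) _)) _.
  by rewrite !(cfst_cpair, csnd_cpair); apply: greedy_j.
have := HO (cpair (cpair E (cpair j n)) (greedy M n a j.+1)).
by rewrite !(cfst_cpair, csnd_cpair) enc_bits_of_nat // ltn_pmod ?expn_gt0.
Qed.

End Program.

Lemma greedy_digits_describable d M : optimal_decompressor d -> computable (Mcode M) ->
  exists c, forall m j n,
    (forall t, t <= j -> stage_defined M n (threshold m n) (greedy M n (threshold m n) t) t) ->
    exists p,
      decomp d p (cpair j n) (bits_of_nat n (digit n (greedy M n (threshold m n) j.+1) j)) /\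
      size p <= size (dec m) + c.
Proof.
move=> opt_d comp_M; have [d' Hd'] := greedy_program comp_M; have [c Hc] := opt_d d'.
by exists c => m j n def; apply: Hc; rewrite /decomp decK; apply: Hd'.
Qed.

(** * Measure of the survivors *)

Section Measure.

Local Open Scope ring_scope.

Lemma sum_codes (R : nmodType) (F : nat -> R) K :
  \sum_(i < 2 ^ K - 1) F i = \sum_(L < K) \sum_(v < 2 ^ L) F (2 ^ L - 1 + v)%N.
Proof.
elim: K => [|K IH]; first by rewrite !big_ord0.
have -> : (2 ^ K.+1 - 1 = (2 ^ K - 1) + 2 ^ K)%N by rewrite expnS; have := expn_gt0 2 K; lia.
by rewrite big_split_ord big_ord_recr /= IH.
Qed.

Lemma ler_sum_widen (F : nat -> rat) N N' : (N <= N')%N -> (forall i, 0 <= F i) ->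
  \sum_(i < N) F i <= \sum_(i < N') F i.
Proof.
move=> le F_ge0; rewrite (big_ord_widen N' F le) big_mkcond /=.
by apply: ler_sum => i _; case: ifP.
Qed.

Lemma exp2_half c : (2 : rat) ^- c.+1 + 2 ^- c.+1 = 2 ^- c.
Proof. by rewrite exprSr invfM; field; rewrite expf_neq0 ?pnatr_eq0. Qed.

Lemma geometric_le N c : \sum_(i < N) (2 : rat) ^- (i + c.+1) <= 2 ^- c.
Proof.
elim: N c => [|N IH] c; first by rewrite big_ord0 invr_ge0 exprn_ge0 ?ler0n.
rewrite big_ord_recl /=.
have -> : \sum_(i < N) (2 : rat) ^- (bump 0 i + c.+1) = \sum_(i < N) 2 ^- (i + c.+2).
  by apply: eq_bigr => i _; rewrite /bump leq0n add1n addSnnS.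
by rewrite add0n -(exp2_half c) lerD2l IH.
Qed.

Variables (M : seq bool -> seq bool) (n a : nat).
Hypothesis M_mono : forall w w', prefix w w' -> prefix (M w) (M w').

Local Notation S := (count_survivors M n a).
Local Notation F := (count_minimal_survivors M n a).

Lemma minimal_survivors_below K : \sum_(L < K.+1) (F L)%:R * (2 : rat) ^- L <= (S K)%:R * 2 ^- K.
Proof.
elim: K => [|K IH].
  rewrite big_ord1 ler_wpM2r ?invr_ge0 ?exprn_ge0 ?ler0n // ler_nat.
  apply: leq_sum => v _.
  by case: (boolP (minimal_survivor _ _ _ _)) => // /minimal_survivor_survives ->.
rewrite big_ord_recr /=; apply: le_trans (lerD IH (lexx _)) _.
have -> : (2 : rat) ^- K = 2 * 2 ^- K.+1.
  by rewrite exprSr invfM mulrCA mulfV ?mulr1 ?pnatr_eq0.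
rewrite mulrA -mulrDl ler_wpM2r ?invr_ge0 ?exprn_ge0 ?ler0n //.
by rewrite -natrM -natrD ler_nat muln2 survivors_double.
Qed.

Lemma minimal_survivors_weight K :
  \sum_(L < K) \sum_(v < 2 ^ L) (minimal_survivor M n a (bits_of_nat L v))%:R * (2 : rat) ^- L
  <= 2 ^- a.
Proof.
rewrite (eq_bigr (fun L : 'I_K => (F L)%:R * 2 ^- L)); last first.
  by move=> L _; rewrite -mulr_suml natr_sum.
have weight_ge0 L : 0 <= (F L)%:R * (2 : rat) ^- L.
  by rewrite mulr_ge0 ?invr_ge0 ?exprn_ge0 ?ler0n.
have /= widen := ler_sum_widen (leqnSn K) weight_ge0.
apply: le_trans widen _.
apply: le_trans (minimal_survivors_below K) _.
have sparse : (S K)%:R * 2 ^+ a <= (2 : rat) ^+ K.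
  by rewrite -!natrX -natrM ler_nat ltnW // survivors_sparse.
by rewrite ler_pdivrMr ?exprn_gt0 ?ltr0n // mulrC ler_pdivlMr ?exprn_gt0 ?ltr0n.
Qed.

End Measure.

(** * Covering the random bits that produce complex sequences *)

Lemma take_mkseq (r : nat -> bool) L L' : L' <= L -> take L' (mkseq r L) = mkseq r L'.
Proof. by move=> le; rewrite /mkseq -map_take take_iota (minn_idPl le). Qed.

Lemma size_substr omega k n : size (substr omega k n) = n.
Proof. by rewrite size_map size_iota. Qed.

Lemma substr_bitsK omega k n : bits_of_nat n (nat_of_bits (substr omega k n)) = substr omega k n.
Proof. by rewrite -{1}(size_substr omega k n) nat_of_bitsK. Qed.

Section Outputs.

Variables (M : seq bool -> seq bool) (r omega : nat -> bool).
Hypothesis M_mono : forall w w', prefix w w' -> prefix (M w) (M w').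
Hypothesis M_outputs : outputs M r omega.

Lemma outputs_nth L i : i < size (M (mkseq r L)) -> nth false (M (mkseq r L)) i = omega i.
Proof.
have [L' [lt' <-]] := M_outputs i.
have pre L1 L2 : L1 <= L2 -> prefix (M (mkseq r L1)) (M (mkseq r L2)).
  by move=> le; apply: M_mono; rewrite -(take_mkseq r le) prefix_take.
case: (leqP L L') => [/pre | /ltnW/pre] /prefixP[u ->] lt; rewrite nth_cat ?lt //.
by rewrite lt'.
Qed.

Lemma outputs_block L n j : j + n <= size (M (mkseq r L)) ->
  block n j (M (mkseq r L)) = nat_of_bits (substr omega j n).
Proof.
move=> le; congr nat_of_bits.
have size_block : size (take n (drop j (M (mkseq r L)))) = n.
  by rewrite size_takel // size_drop leq_subRL // (leq_trans (leq_addr n j)).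
apply: (@eq_from_nth _ false); rewrite size_block ?size_substr // => i lt.
rewrite nth_take // nth_drop outputs_nth; last by rewrite (leq_trans _ le) // ltn_add2l.
by rewrite (nth_map 0) ?size_iota // nth_iota.
Qed.

Lemma outputs_avoid n s k :
  (forall j, j < k -> nat_of_bits (substr omega j n) != digit n s j) ->
  exists L, avoids n s k (M (mkseq r L)).
Proof.
move=> differ; have [L [long _]] := M_outputs (k + n); exists L.
apply/andP; split; first exact: ltnW.
apply/allP => j; rewrite mem_iota => /andP[_ lt].
have fits : j + n <= size (M (mkseq r L)) by rewrite (leq_trans _ (ltnW long)) // leq_add2r ltnW.
by rewrite outputs_block // differ.
Qed.

End Outputs.

Section Cover.

Local Open Scope ring_scope.

Variables (M : seq bool -> seq bool) (m : nat).
Hypothesis M_mono : forall w w', prefix w w' -> prefix (M w) (M w').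

(* Indices that do not code a minimal survivor get a dummy cylinder of measure 2^-(i+m+2). *)
Definition cover i : seq bool :=
  if decide (exists n, minimal_survivor M n (threshold m n) (dec i)) then dec i
  else nseq (i + m.+2) false.

Lemma cover_complete r n :
  (exists L, survives M n (threshold m n) (mkseq r L)) -> exists i, cylinder (cover i) r.
Proof.
case/ex_minnP=> L surv min_L; exists (enc (mkseq r L)); rewrite /cover encK.
have minimal : minimal_survivor M n (threshold m n) (mkseq r L).
  rewrite /minimal_survivor surv; apply/allP => i; rewrite mem_iota size_mkseq => /andP[_ lt].
  by rewrite take_mkseq ?(ltnW lt) //; apply/negP => /min_L; rewrite leqNgt lt.
by case: decideP => [_ | []]; [rewrite /cylinder size_mkseq | exists n].
Qed.

Lemma minimal_survivors_codes_weight n N :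
  \sum_(i < N) (minimal_survivor M n (threshold m n) (dec i))%:R * (2 : rat) ^- size (dec i)
  <= 2 ^- (threshold m n).
Proof.
have N_le : (N <= 2 ^ N - 1)%N by have := ltn_expl N (ltnSn 1); lia.
have weight_ge0 i :
    0 <= (minimal_survivor M n (threshold m n) (dec i))%:R * (2 : rat) ^- size (dec i).
  by rewrite mulr_ge0 ?invr_ge0 ?exprn_ge0 ?ler0n.
have /= widen := ler_sum_widen N_le weight_ge0.
apply: le_trans widen _.
rewrite (sum_codes (fun i => (minimal_survivor M n (threshold m n) (dec i))%:R *
                           (2 : rat) ^- size (dec i))).
under eq_bigr => L _ do under eq_bigr => v _ do rewrite (dec_code (ltn_ord v)) size_bits_of_nat.
exact: minimal_survivors_weight.
Qed.

Lemma cover_weight N : \sum_(i < N) (2 : rat) ^- size (cover i) <= 2 ^- m.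
Proof.
pose B := (\max_(i < N) size (M (dec i))).+1.
pose ms n i := (minimal_survivor M n (threshold m n) (dec i))%:R * (2 : rat) ^- size (dec i).
have ms_ge0 n i : 0 <= ms n i by rewrite mulr_ge0 ?invr_ge0 ?exprn_ge0 ?ler0n.
have bound_i (i : 'I_N) : 2 ^- size (cover i) <= \sum_(n < B) ms n i + 2 ^- (i + m.+2).
  rewrite /cover; case: decideP => [[n min_n] | _]; last by rewrite size_nseq lerDr sumr_ge0.
  have nB : (n < B)%N by rewrite ltnS (leq_trans (minimal_survivor_size min_n)) // (leq_bigmax i).
  rewrite (bigD1 (Ordinal nB)) //= {1}/ms min_n mul1r -addrA lerDl addr_ge0 ?sumr_ge0 //.
  by rewrite invr_ge0 exprn_ge0 ?ler0n.
apply: (@le_trans _ _ (\sum_(i < N) (\sum_(n < B) ms n i + 2 ^- (i + m.+2)))).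
  by apply: ler_sum => i _; apply: bound_i.
rewrite big_split /= exchange_big /= -exp2_half.
apply: lerD; last exact: geometric_le.
apply: (@le_trans _ _ (\sum_(n < B) (2 : rat) ^- (threshold m n))).
  by apply: ler_sum => n _; apply: minimal_survivors_codes_weight.
by rewrite /threshold; under eq_bigr do rewrite addnAC addnC addn2; apply: geometric_le.
Qed.

End Cover.

Theorem theorem3 (d : code) (Hd : optimal_decompressor d)
  (M : seq bool -> seq bool) (HM : prob_algorithm M) :
  null (fun r : nat -> bool =>
          exists omega : nat -> bool, outputs M r omega /\ complex_substrings d omega).
Proof.
case: HM => M_comp M_mono.
have [c describe] := greedy_digits_describable Hd (computable_Mcode M_comp).
move=> m; exists (cover M m); split=> [r [om [out [g [_ [_ [g_unbounded g_low]]]]]] | N].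
  have [n gn] := g_unbounded (size (dec m) + c).+1.
  have [_ defined] := halt_stageP n (threshold m n) M_mono.
  apply: (cover_complete (n := n)); apply: (outputs_avoid M_mono out) => j lt_j.
  apply/negP => /eqP same.
  have [p [dp size_p]] := describe m j n (fun t le => defined t (leq_ltn_trans le lt_j)).
  rewrite (digit_greedy _ _ _ (ltnSn j)) -(digit_greedy _ _ _ lt_j) -same substr_bitsK in dp.
  by have := g_low j n p dp; lia.
exact: cover_weight.
Qed.
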